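(* Let $G$ be a finite transitive permutation group with point stabiliser $H$, let $p$ be a prime, let $S$ be a Sylow $p$-subgroup of $H$, and let $x\in H$ have order a power of $p$. (i) If $|S^G|>|S^H|^2-|S^H|+1$, then $G$ has a subdegree divisible by $p$. (ii) If $|x^G|>|x^G\cap H|^2-|x^G\cap H|+1$, then $G$ has a subdegree divisible by $p$.
   Context: $S^G$ denotes the set of $G$-conjugates of $S$ (similarly $S^H$, $x^G$). A subdegree is the size of an orbit of a point stabiliser. *)

From mathcomp Require Import all_boot all_fingroup all_solvable.
Set Implicit Arguments.
Unset Strict Implicit.
Unset Printing Implicit Defensive.

From mathcomp Require Import all_boot all_fingroup all_solvable zify ring.
Set Implicit Arguments.
Unset Strict Implicit.
Unset Printing Implicit Defensive.

(* Suppose no subdegree is divisible by p, and let R be a subset of H generating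
   a p-group (R = S, or R = {x}).  A p-subgroup of H fixes a point in every
   H-orbit of size prime to p, so for any two points a^g and c some G-conjugate
   of R fixes both.  Thus the conjugates of R and the points of T form an
   intersecting configuration: every point is fixed by the same number k of
   conjugates (k = |S^H| by Sylow's theorem, resp. k = |x^G \cap H|), every
   conjugate fixes the same number d of points, and any two points have a common
   fixing conjugate.  Double counting and Cauchy-Schwarz applied to the numbers
   of points fixed by both a given conjugate and another one force
   |R^G| <= k^2 - k + 1. *)

Lemma card_set_cond_sum (V : finType) (A : {pred V}) (Q : pred V) :
  #|[set y in A | Q y]| = \sum_(y in A) Q y.
Proof.
rewrite -sum1_card big_mkcond [RHS]big_mkcond /=.
by apply: eq_bigr => y _; rewrite !inE; case: (y \in A); case: (Q y).
Qed.

Lemma sum_sq_leq (V : finType) (A : {pred V}) (l : V -> nat) :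
  (\sum_(y in A) l y) ^ 2 <= #|A| * \sum_(y in A) l y ^ 2.
Proof.
have double_sq : 2 * (\sum_(y in A) l y) ^ 2 =
    \sum_(i in A) \sum_(j in A) 2 * (l i * l j).
  rewrite expnS expn1 big_distrl big_distrr /=.
  by apply: eq_bigr => i _; rewrite big_distrr /= big_distrr.
have double_rhs : 2 * (#|A| * \sum_(y in A) l y ^ 2) =
    \sum_(i in A) \sum_(j in A) (l i ^ 2 + l j ^ 2).
  have row i : \sum_(j in A) (l i ^ 2 + l j ^ 2) =
      #|A| * l i ^ 2 + \sum_(j in A) l j ^ 2.
    by rewrite big_split /= sum_nat_const.
  rewrite (eq_bigr _ (fun i _ => row i)) big_split /= -big_distrr sum_nat_const.
  by rewrite mul2n addnn.
rewrite -(@leq_pmul2l 2) // double_sq double_rhs.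
by apply: leq_sum => i _; apply: leq_sum => j _; exact: (nat_Cauchy _ _).1.
Qed.

(* [w^2 - (k^2 - 1) w + k (k - 1)^2] has the roots [k - 1] and [k^2 - k]. *)
Lemma quadratic_root_bound (k w : nat) :
  k * (k - 1) ^ 2 + w * w.+1 <= k ^ 2 * w -> w <= k ^ 2 - k.
Proof. by case: k => [|j]; [rewrite !mul0n | rewrite subSS subn0]; nia. Qed.

Section IntersectingFamily.

Variables (V B : finType) (inc : V -> B -> bool) (F : {set V}) (k d : nat).
Hypothesis block_card : forall b, #|[set y in F | inc y b]| = k.
Hypothesis point_card : forall y, y \in F -> #|[set b | inc y b]| = d.
Hypothesis d_gt0 : 0 < d.
Hypothesis blocks_meet : forall b c, exists2 y, y \in F & inc y b && inc y c.

Lemma sum_inc_block b : \sum_(y in F) inc y b = k.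
Proof. by rewrite -card_set_cond_sum. Qed.

Lemma sum_inc_point y : y \in F -> \sum_b inc y b = d.
Proof.
move=> Fy; rewrite -(point_card Fy) -card_set_cond_sum.
by apply: eq_card => b; rewrite !inE.
Qed.

Lemma double_count : #|B| * k = #|F| * d.
Proof.
have : \sum_b \sum_(y in F) (inc y b : nat) =
       \sum_(y in F) \sum_b (inc y b : nat).
  exact: exchange_big.
rewrite (eq_bigr _ (fun b _ => sum_inc_block b)) sum_nat_const.
by rewrite (eq_bigr _ (fun y Fy => sum_inc_point Fy)) sum_nat_const.
Qed.

Section FixedPoint.

Variable x : V.
Hypothesis Fx : x \in F.

Let common y := \sum_b (inc x b && inc y b).

Let weight b := \sum_(y in F) inc y b * common y.

Lemma common_self : common x = d.
Proof. by rewrite -(sum_inc_point Fx); apply: eq_bigr => b _; rewrite andbb. Qed.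

Lemma sum_common : \sum_(y in F) common y = d * k.
Proof.
rewrite exchange_big /= -(sum_inc_point Fx) big_distrl /=.
apply: eq_bigr => b _; rewrite -(sum_inc_block b) big_distrr /=.
by apply: eq_bigr => y _; rewrite mulnb.
Qed.

Lemma sum_weight : \sum_b weight b = d * (d * k).
Proof.
rewrite exchange_big /= -sum_common big_distrr /=; apply: eq_bigr => y Fy.
by rewrite -big_distrl /= sum_inc_point.
Qed.

Lemma sum_weight_through :
  \sum_(b | inc x b) weight b = \sum_(y in F) common y ^ 2.
Proof.
rewrite exchange_big /=; apply: eq_bigr => y _.
rewrite -big_distrl /= expnS expn1; congr (_ * _).
by rewrite big_mkcond /=; apply: eq_bigr => b _; case: (inc x b).
Qed.

(* [weight b] counts the pairs (y, c) with [c] a block through [x] and [y] on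
   both [b] and [c]; every such [c] meets [b]. *)
Lemma weight_geq b : d <= weight b.
Proof.
have -> : weight b = \sum_c inc x c * \sum_(y in F) (inc y b && inc y c).
  rewrite /weight /common; under eq_bigr => y _ do rewrite big_distrr /=.
  rewrite exchange_big /=; apply: eq_bigr => c _; rewrite big_distrr /=.
  by apply: eq_bigr => y _; case: (inc x c); case: (inc y b); case: (inc y c).
rewrite -{1}(sum_inc_point Fx); apply: leq_sum => c _.
case: (inc x c) => //=; rewrite mul1n.
have [y Fy /andP [yb yc]] := blocks_meet b c.
by rewrite (bigD1 y) //= yb yc.
Qed.

Lemma sum_common_sq : \sum_(y in F) common y ^ 2 + #|B| * d <= d * d * k + d * d.
Proof.
have card_B : #|B| * d = d * d + \sum_(b | ~~ inc x b) d.
  by rewrite -sum_nat_const (bigID (inc x)) /= sum_nat_cond_const point_card.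
have off_x : \sum_(b | ~~ inc x b) d <= \sum_(b | ~~ inc x b) weight b.
  by apply: leq_sum => b _; apply: weight_geq.
have := sum_weight; rewrite (bigID (inc x)) /= sum_weight_through mulnA => <-.
by rewrite card_B -addnA leq_add2l addnC leq_add2r.
Qed.

End FixedPoint.

Lemma card_intersecting_family_leq : #|F| <= k ^ 2 - k + 1.
Proof.
have [-> | [x Fx]] := set_0Vmem F; first by rewrite cards0.
have sum_sq := sum_common_sq Fx; have sum1 := sum_common Fx.
rewrite (big_setD1 x Fx) /= common_self // in sum_sq.
rewrite (big_setD1 x Fx) /= common_self // in sum1.
set Q := \sum_(y in F :\ x) _ ^ 2 in sum_sq.
set S := \sum_(y in F :\ x) _ in sum1.
have CS : S ^ 2 <= #|F :\ x| * Q := sum_sq_leq _ _.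
have dc := double_count; rewrite (cardsD1 x F) Fx /= add1n in dc *.
set w := #|F :\ x| in CS dc *.
have S_eq : S = d * (k - 1) by rewrite mulnBr muln1 -sum1 addKn.
have QB : Q + #|B| * d <= d * d * k.
  by move: sum_sq; rewrite expnS expn1 -addnA addnC leq_add2r.
rewrite addn1 ltnS; apply: quadratic_root_bound.
rewrite -(@leq_pmul2l (d * d)) ?muln_gt0 ?d_gt0 // mulnDr.
have -> : d * d * (k * (k - 1) ^ 2) = k * S ^ 2 by rewrite S_eq; ring.
have -> : d * d * (w * w.+1) = k * w * (#|B| * d).
  by transitivity (w * d * (w.+1 * d)); [ring | rewrite -dc; ring].
have -> : d * d * (k ^ 2 * w) = k * w * (d * d * k) by ring.
apply: (@leq_trans (k * w * (Q + #|B| * d))); last by rewrite leq_mul2l QB orbT.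
by rewrite mulnDr leq_add2r -mulnA leq_mul2l CS orbT.
Qed.

End IntersectingFamily.

Local Open Scope group_scope.

Section TotalAction.

Variables (aT : finGroupType) (rT : finType) (to : {action aT &-> rT}).

Lemma subJ_astab1_act (A : {set aT}) x g :
  (A :^ g \subset 'C[to x g | to]) = (A \subset 'C[x | to]).
Proof. by rewrite astab1_act conjSg. Qed.

Lemma afix_conjsg (A : {set aT}) g : 'Fix_to(A :^ g) = to^~ g @: 'Fix_to(A).
Proof.
apply/setP => y; rewrite -[y](actKV to g) (mem_imset _ _ (act_inj to g)).
by rewrite -!sub_astab1 subJ_astab1_act.
Qed.

Lemma card_afix_conjsg (A : {set aT}) g : #|'Fix_to(A :^ g)| = #|'Fix_to(A)|.
Proof. by rewrite afix_conjsg card_imset //; apply: act_inj. Qed.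

End TotalAction.

Lemma pgroup_fix_orbit (aT : finGroupType) (D : {group aT}) (rT : finType)
    (to : action D rT) (K A : {group aT}) (p : nat) (x : rT) :
  K \subset D -> A \subset K -> p.-group A -> ~~ (p %| #|orbit to K x|) ->
  exists2 h, h \in K & A \subset 'C[to x h | to].
Proof.
move=> sKD sAK pA p'Kx.
have actsA : [acts A, on orbit to K x | to].
  exact: subset_trans sAK (acts_orbit _ _ sKD).
have [fix0 | [_ /setIP [/imsetP [h Kh ->] fixA]]] :=
  set_0Vmem 'Fix_(orbit to K x | to)(A).
  by move: p'Kx; rewrite /dvdn (pgroup_fix_mod pA actsA) fix0 cards0 mod0n.
by exists h; rewrite // sub_astab1_in // (subset_trans sAK).
Qed.

Lemma Sylow_conjugates_sub (gT : finGroupType) (G H S : {group gT}) (p : nat) :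
  H \subset G -> p.-Sylow(H) S -> [set Q in S :^: G | Q \subset H] = S :^: H.
Proof.
move=> sHG sylS; have sSH := pHall_sub sylS.
apply/setP => Q; rewrite inE.
apply/andP/imsetP => [[/imsetP [g Gg ->] sSgH] | [h Hh ->]].
  have sylSg : p.-Sylow(H) (S :^ g)%G.
    by rewrite pHallE sSgH /= cardJg (card_Hall sylS) eqxx.
  by have [h Hh ->] := Sylow_trans sylS sylSg; exists h.
split; last by rewrite -(conjGid Hh) conjSg.
by apply/imsetP; exists h; rewrite ?(subsetP sHG).
Qed.

Lemma card_conjugates_set1_sub (gT : finGroupType) (x : gT) (G : {group gT})
    (A : {set gT}) :
  #|[set Q in [set x] :^: G | Q \subset A]| = #|x ^: G :&: A|.
Proof.
rewrite -[RHS](card_imset _ set1_inj); apply: eq_card => Q; rewrite inE.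
apply/andP/imsetP => [[/imsetP [g Gg ->] sxA] |
                      [_ /setIP [/imsetP [g Gg ->] Axg] ->]].
  exists (x ^ g); rewrite ?conjg_set1 // inE memJ_class //.
  by rewrite -sub1set -conjg_set1.
by rewrite sub1set Axg -conjg_set1; split=> //; apply/imsetP; exists g.
Qed.

Lemma card_conjugates_set1 (gT : finGroupType) (x : gT) (G : {group gT}) :
  #|[set x] :^: G| = #|x ^: G|.
Proof.
rewrite -[x ^: G]setIT -card_conjugates_set1_sub.
by apply: eq_card => Q; rewrite inE subsetT andbT.
Qed.

Section Subdegrees.

Variables (T : finType) (G : {group {perm T}}) (a : T) (p : nat).
Hypothesis G_trans : [transitive G, on [set: T] | 'P].
Let H := 'C_G[a | 'P].
Hypothesis p'_subdegrees : forall b, ~~ (p %| #|orbit 'P H b|).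

Lemma card_fixing_conjugates_act (R : {set {perm T}}) b g : g \in G ->
  #|[set Q in R :^: G | Q \subset 'C['P%act b g | 'P]]| =
  #|[set Q in R :^: G | Q \subset 'C[b | 'P]]|.
Proof.
move=> Gg; rewrite -[RHS](card_imset _ (@conjsg_inj _ g)); apply: eq_card => Q.
rewrite -[Q](conjsgKV g) (mem_imset _ _ (@conjsg_inj _ g)) !inE subJ_astab1_act.
by rewrite (orbit_actr 'Js _ _ Gg).
Qed.

Lemma card_conjugates_leq (R : {set {perm T}}) :
  R \subset H -> p.-group <<R>> ->
  #|R :^: G| <= #|[set Q in R :^: G | Q \subset H]| ^ 2
                - #|[set Q in R :^: G | Q \subset H]| + 1.
Proof.
move=> sRH pR; have /subsetIP [sRG sRa] := sRH.
have sQG Q : Q \in R :^: G -> Q \subset G.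
  by case/imsetP => g Gg ->; rewrite -(conjGid Gg) conjSg.
have to_a b : exists2 g, g \in G & b = 'P%act a g.
  exact (atransP2 G_trans (in_setT a) (in_setT b)).
apply: (@card_intersecting_family_leq _ _
    (fun (Q : {set {perm T}}) (b : T) => Q \subset 'C[b | 'P]) _ _
    #|'Fix_('P)(R)|).
- move=> b; have [g Gg ->] := to_a b; rewrite card_fixing_conjugates_act //.
  apply: eq_card => Q; rewrite [RHS]inE [in RHS]subsetI [LHS]inE.
  by case: (boolP (Q \in R :^: G)) => // /sQG ->.
- move=> _ /imsetP [g Gg ->]; rewrite -(card_afix_conjsg _ _ g).
  by apply: eq_card => b; rewrite inE sub_astab1.
- by apply/card_gt0P; exists a; rewrite -sub_astab1.
move=> b c; have [g Gg ->] := to_a b.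
have sRgH : <<R>> \subset H by rewrite gen_subG.
have [h Hh sRch] :=
  pgroup_fix_orbit (subsetT H) sRgH pR (p'_subdegrees ('P%act c g^-1)).
have /setIP [Gh ah] := Hh.
exists (R :^ (h^-1 * g)).
  by apply/imsetP; exists (h^-1 * g); rewrite ?groupM ?groupV.
rewrite conjsgM subJ_astab1_act sub_conjgV (conjGid ah) sRa /=.
rewrite -[c](actKV 'P g) subJ_astab1_act sub_conjgV -astab1_act.
by rewrite -gen_subG.
Qed.

End Subdegrees.

Theorem lemma2p6 (T : finType) (G : {group {perm T}}) (a : T) (p : nat) :
  [transitive G, on [set: T] | 'P] ->
  prime p ->
  let H := 'C_G[a | 'P] in
  (forall S : {group {perm T}}, S \in 'Syl_p(H) ->
     #|S :^: H| ^ 2 - #|S :^: H| + 1 < #|S :^: G| ->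
     exists b : T, p %| #|orbit 'P H b|) /\
  (forall x : {perm T}, x \in H -> p.-elt x ->
     #|x ^: G :&: H| ^ 2 - #|x ^: G :&: H| + 1 < #|x ^: G| ->
     exists b : T, p %| #|orbit 'P H b|).
Proof.
move=> G_trans _ H.
have [/existsP [b pHb] | /existsPn p'H] := boolP [exists b, p %| #|orbit 'P H b|].
  by split=> *; exists b.
split=> [S | x Hx px]; last rewrite ltnNge => /negP[].
  rewrite inE => sylS; rewrite ltnNge => /negP[].
  rewrite -(Sylow_conjugates_sub (subsetIl G _) sylS).
  apply: (card_conjugates_leq G_trans p'H (pHall_sub sylS)).
  by rewrite genGid (pHall_pgroup sylS).
rewrite -card_conjugates_set1 -(card_conjugates_set1_sub x G H).
by apply: (card_conjugates_leq G_trans p'H); rewrite ?sub1set.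
Qed.
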